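(* Let $\mathcal U(\mathbb R)$ be the family of open subsets of $\mathbb R$, and let $F:\mathcal U(\mathbb R)\to\mathcal U(\mathbb R)$ be a bijection satisfying $F(U_1\cap U_2)=F(U_1)\cap F(U_2)$ for all $U_1,U_2\in\mathcal U(\mathbb R)$. Then there exists a bijection $u:\mathbb R\to\mathbb R$ such that $F(U)=\{u(x):x\in U\}$ for every open $U\subset\mathbb R$. *)

From Stdlib Require Import Reals Rtopology.
Open Scope R_scope.

Definition OpenSet : Type := { U : R -> Prop | open_set U }.

Definition carrier (U : OpenSet) : R -> Prop := proj1_sig U.

From Stdlib Require Import Reals Rtopology Lra.
From Stdlib Require Import Classical FunctionalExtensionality PropExtensionality
  ProofIrrelevance IndefiniteDescription.
Open Scope R_scope.

(* The hypotheses say that F is a bijection of the open sets of R preserving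
   binary intersections; such an F preserves and reflects inclusion, i.e. it
   is an automorphism of the ordered set (U(R), ⊆).  The rest of the argument
   only uses this order structure:
   - a point y lies outside an open set U iff U ⊆ R∖{y}, so membership is
     expressible through inclusions into punctured lines R∖{y};
   - the punctured lines are coatoms: an open set containing R∖{x} is either
     R∖{x} or R;
   - hence an order automorphism G maps each R∖{x} onto some R∖{u(x)};
   - consequently u(x) ∈ G(U) iff x ∈ U, from which u is a bijection of R
     and G(U) = u(U). *)

Definition Included (U V : OpenSet) : Prop :=
  forall x, carrier U x -> carrier V x.

Lemma open_ext (U V : OpenSet) :
  (forall x, carrier U x <-> carrier V x) -> U = V.
Proof.
  destruct U as [U HU], V as [V HV]; unfold carrier; simpl; intros H.
  assert (U = V) by
    (apply functional_extensionality; intro; apply propositional_extensionality; apply H).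
  subst; f_equal; apply proof_irrelevance.
Qed.

Lemma punctured_open (x : R) : open_set (fun z => z <> x).
Proof.
  intros z Hz.
  assert (Hp : 0 < Rabs (z - x)) by (apply Rabs_pos_lt; intro; apply Hz; lra).
  exists (mkposreal _ Hp); intros y Hy; unfold disc in Hy; simpl in Hy.
  intro; subst; rewrite Rabs_minus_sym in Hy; lra.
Qed.

Definition Punct (x : R) : OpenSet := exist _ (fun z => z <> x) (punctured_open x).
Definition Whole : OpenSet := exist _ (fun _ => True) open_set_P5.
Definition Inter (U V : OpenSet) : OpenSet :=
  exist _ (intersection_domain (carrier U) (carrier V))
    (open_set_P3 _ _ (proj2_sig U) (proj2_sig V)).

Lemma not_mem_iff_included (U : OpenSet) (y : R) :
  ~ carrier U y <-> Included U (Punct y).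
Proof.
  split.
  - intros Hy z Hz Hzy; subst; contradiction.
  - intros H Hy; exact (H y Hy eq_refl).
Qed.

Lemma Punct_coatom (x : R) (V : OpenSet) :
  Included (Punct x) V -> Included V (Punct x) \/ Included Whole V.
Proof.
  intros HxV; destruct (classic (carrier V x)) as [Hx | Hx].
  - right; intros z _; destruct (Req_dec z x) as [-> | Hzx]; auto.
  - left; exact (proj1 (not_mem_iff_included V x) Hx).
Qed.

Section OrderAutomorphism.

Variable G : OpenSet -> OpenSet.
Hypothesis G_order : forall U V : OpenSet, Included U V <-> Included (G U) (G V).
Hypothesis G_surj : forall V : OpenSet, exists U : OpenSet, G U = V.

Lemma G_Whole : Included Whole (G Whole).
Proof.
  destruct (G_surj Whole) as [V HV]; intros y _.
  apply (proj1 (G_order V Whole) (fun _ _ => I)); rewrite HV; exact I.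
Qed.

Lemma G_Punct (x : R) : exists y : R, forall z, carrier (G (Punct x)) z <-> z <> y.
Proof.
  assert (Hmiss : exists y, ~ carrier (G (Punct x)) y).
  { apply not_all_ex_not; intros Hfull.
    exact (proj2 (G_order Whole (Punct x)) (fun y _ => Hfull y) x I eq_refl). }
  destruct Hmiss as [y Hy]; destruct (G_surj (Punct y)) as [V HV].
  assert (Hsub : Included (G (Punct x)) (G V)).
  { rewrite HV; exact (proj1 (not_mem_iff_included _ y) Hy). }
  destruct (Punct_coatom x V (proj2 (G_order _ _) Hsub)) as [HVx | HVwhole].
  - exists y; intros z; split.
    + intros Hz; specialize (Hsub z Hz); rewrite HV in Hsub; exact Hsub.
    + intros Hz; apply (proj1 (G_order V (Punct x)) HVx); rewrite HV; exact Hz.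
  - exfalso; pose proof (proj1 (G_order _ _) HVwhole y (G_Whole y I)) as Hyy.
    rewrite HV in Hyy; exact (Hyy eq_refl).
Qed.

Definition point_image (x : R) : R :=
  proj1_sig (constructive_indefinite_description _ (G_Punct x)).

Lemma point_image_spec (x z : R) :
  carrier (G (Punct x)) z <-> z <> point_image x.
Proof.
  exact (proj2_sig (constructive_indefinite_description _ (G_Punct x)) z).
Qed.

Lemma G_mem (U : OpenSet) (x : R) :
  carrier (G U) (point_image x) <-> carrier U x.
Proof.
  split; intros H; apply NNPP; intros Hn.
  - apply (not_mem_iff_included U x), (G_order U (Punct x)) in Hn.
    exact (proj1 (point_image_spec x _) (Hn _ H) eq_refl).
  - apply (not_mem_iff_included (G U)) in Hn.
    assert (Hsub : Included (G U) (G (Punct x))).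
    { intros z Hz; apply point_image_spec, Hn, Hz. }
    exact (proj2 (G_order _ _) Hsub x H eq_refl).
Qed.

Lemma point_image_inj (x1 x2 : R) : point_image x1 = point_image x2 -> x1 = x2.
Proof.
  intros E; apply NNPP; intros Hn.
  assert (H2 : carrier (G (Punct x1)) (point_image x2))
    by (apply G_mem; intros e; exact (Hn (eq_sym e))).
  exact (proj1 (point_image_spec x1 _) H2 (eq_sym E)).
Qed.

Lemma point_image_surj (y : R) : exists x : R, point_image x = y.
Proof.
  destruct (G_surj (Punct y)) as [V HV].
  assert (Hx : exists x, ~ carrier V x).
  { apply not_all_ex_not; intros Hfull.
    assert (Hyy := proj1 (G_order Whole V) (fun z _ => Hfull z) y (G_Whole y I)).
    rewrite HV in Hyy; exact (Hyy eq_refl). }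
  destruct Hx as [x Hx]; exists x; apply NNPP; intros Hn.
  apply Hx, G_mem; rewrite HV; exact Hn.
Qed.

Lemma G_image (U : OpenSet) (y : R) :
  carrier (G U) y <-> exists x : R, carrier U x /\ y = point_image x.
Proof.
  split.
  - intros Hy; destruct (point_image_surj y) as [x <-].
    exists x; split; [apply G_mem |]; auto.
  - intros [x [Hx ->]]; apply G_mem, Hx.
Qed.

End OrderAutomorphism.

Lemma cap_preserving_order (F : OpenSet -> OpenSet)
  (F_inj : forall U1 U2 : OpenSet, F U1 = F U2 -> U1 = U2)
  (F_cap : forall U1 U2 W : OpenSet,
      (forall x, carrier W x <-> (carrier U1 x /\ carrier U2 x)) ->
      forall y, carrier (F W) y <-> (carrier (F U1) y /\ carrier (F U2) y))
  (U V : OpenSet) : Included U V <-> Included (F U) (F V).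
Proof.
  split.
  - intros HUV y Hy.
    assert (HU : forall x, carrier U x <-> carrier U x /\ carrier V x)
      by (intros x; split; [intros h; split; auto | intros h; apply h]).
    exact (proj2 (proj1 (F_cap U V U HU y) Hy)).
  - intros HFUV x Hx.
    assert (E : Inter U V = U).
    { apply F_inj, open_ext; intros y.
      rewrite (F_cap U V (Inter U V) (fun z => iff_refl _)).
      split; [intros h; apply h | intros h; split; auto]. }
    rewrite <- E in Hx; exact (proj2 Hx).
Qed.

Theorem lemmaB1 (F : OpenSet -> OpenSet)
  (F_inj : forall U1 U2 : OpenSet, F U1 = F U2 -> U1 = U2)
  (F_surj : forall V : OpenSet, exists U : OpenSet, F U = V)
  (F_cap : forall U1 U2 W : OpenSet,
      (forall x, carrier W x <-> (carrier U1 x /\ carrier U2 x)) ->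
      forall y, carrier (F W) y <-> (carrier (F U1) y /\ carrier (F U2) y)) :
  exists u : R -> R,
    (forall x1 x2 : R, u x1 = u x2 -> x1 = x2) /\
    (forall y : R, exists x : R, u x = y) /\
    (forall (U : OpenSet) (y : R),
        carrier (F U) y <-> exists x : R, carrier U x /\ y = u x).
Proof.
  pose proof (cap_preserving_order F F_inj F_cap) as F_order.
  exists (point_image F F_order F_surj); split; [| split].
  - apply point_image_inj.
  - apply point_image_surj.
  - apply G_image.
Qed.
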